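(* Let $\mathbb{X},\mathbb{Y}$ be real Banach spaces such that $\operatorname{Sm}\mathbb{X}$ and $\operatorname{Sm}\mathbb{Y}$ are dense $G_\delta$ subsets of $\mathbb{X}$ and $\mathbb{Y}$ respectively. If a bijective bounded linear operator $T:\mathbb{X}\to\mathbb{Y}$ preserves Birkhoff–James orthogonality at each point of $\operatorname{Sm}\mathbb{X}\cap T^{-1}(\operatorname{Sm}\mathbb{Y})$, then $T$ is a scalar multiple of an isometry, i.e. there is a constant $\lambda>0$ with $\|Tx\|=\lambda\|x\|$ for all $x\in\mathbb{X}$.
   Context: $u\perp_B v$ means $\|u+\lambda v\|\ge\|u\|$ for all real $\lambda$. $T$ preserves Birkhoff–James orthogonality at $x$ if $x\perp_B v$ implies $Tx\perp_B Tv$ for all $v$. For non-zero $z$, $J(z)=\{f\in\mathbb{X}^*:\|f\|=1,\ f(z)=\|z\|\}$; $z$ is smooth if $J(z)$ is a singleton; $\operatorname{Sm}\mathbb{X}$ is the set of smooth points. *)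

From HB Require Import structures.
From mathcomp Require Import all_boot all_order all_algebra.
From mathcomp Require Import all_classical all_reals all_analysis.
From mathcomp Require Import borel_hierarchy.
Set Implicit Arguments. Unset Strict Implicit. Unset Printing Implicit Defensive.
Import Order.TTheory GRing.Theory Num.Theory.
Import numFieldNormedType.Exports.
Local Open Scope classical_set_scope.
Local Open Scope ring_scope.

Section BJ.
Context {R : realType} {X : normedModType R}.

Definition bj_orth (u v : X) : Prop := forall l : R, `|u| <= `|u + l *: v|.

Definition linear_functional (f : X -> R) : Prop :=
  forall (a : R) (x y : X), f (a *: x + y) = a * f x + f y.

Definition in_dual (f : X -> R) : Prop := linear_functional f /\ continuous f.

Definition dual_norm (f : X -> R) : R :=
  sup [set `|f x| | x in [set x : X | `|x| <= 1]].

Definition Jset (z : X) : set (X -> R) :=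
  [set f | in_dual f /\ dual_norm f = 1 /\ f z = `|z|].

Definition smooth_points : set X :=
  [set z | z != 0 /\ exists f : X -> R, Jset z = [set f]].

End BJ.

Definition preserves_bj_at {R : realType} {X Y : normedModType R}
  (T : X -> Y) (x : X) : Prop :=
  forall v : X, bj_orth x v -> bj_orth (T x) (T v).

From HB Require Import structures.
From mathcomp Require Import all_boot all_order all_algebra.
From mathcomp Require Import all_classical all_reals all_analysis.
From mathcomp Require Import borel_hierarchy.
From mathcomp Require Import ring lra.
Import Order.TTheory GRing.Theory Num.Theory.
Import numFieldNormedType.Exports.
Local Open Scope classical_set_scope.
Local Open Scope ring_scope.

(* For [x] smooth with [T x] smooth, take [f] in [J(x)] and any [w]: the vector
   [w - (f w / |x|) x] lies in [ker f], hence is Birkhoff-James orthogonal to [x],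
   and preservation of orthogonality yields
     [|T x| (2 |x| - |x + w|) <= |x| |T (x - w)|].
   By the Baire category theorem such [x] are dense (the preimage of a dense
   open set under a surjective bounded operator is dense), so the inequality
   holds everywhere by continuity.  Along a line [s |-> p + s v] missing [0], it
   bounds the ratio [|T x| / |x|] at [t + s] by its value at [t] up to the second
   difference of the convex function [s |-> |p + s v|], which is [o(s)]; so the
   ratio has nonpositive upper right Dini derivative and does not increase on
   [[0, 1]].  Running the segment both ways makes the ratio constant. *)

Section NormedTopology.
Context {R : realType} {V : normedModType R}.

Lemma open_normP (O : set V) :
  open O <-> forall x, O x -> exists2 r : R, 0 < r & forall y, `|x - y| < r -> O y.
Proof.
split=> [oO x Ox | H].
  have /nbhs_ballP[r r0 Hr] : nbhs x O by exact: open_nbhs_nbhs.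
  by exists r => // y xy; apply: Hr; rewrite -ball_normE.
rewrite openE => x /H[r r0 Hr]; apply/nbhs_ballP; exists r => // y.
by rewrite -ball_normE; exact: Hr.
Qed.

Lemma dense_normP {S : set V} : dense S ->
  forall p e, 0 < e -> exists x, S x /\ `|p - x| < e.
Proof.
move=> dS p e e0.
have [x [px Sx]] := dS (ball p e) (ex_intro _ p (ballxx p e0)) (ball_open p e).
by exists x; split => //; move: px; rewrite -ball_normE.
Qed.

Lemma subset_dense (A B : set V) : dense A -> A `<=` B -> dense B.
Proof.
move=> dA AB O O0 oO; have [x [Ox Ax]] := dA O O0 oO.
by exists x; split => //; apply: AB.
Qed.

Lemma continuous_at_normP {W : normedModType R} {f : V -> W} {t} :
  {for t, continuous f} ->
  forall e, 0 < e -> exists2 d, 0 < d & forall s, `|t - s| < d -> `|f t - f s| < e.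
Proof.
move=> ft e e0; have : \forall s \near t, `|f t - f s| < e by exact: cvgr_dist_lt.
move=> /nbhs_ballP[d d0 Hd].
by exists d => // s ts; apply: Hd; rewrite -ball_normE.
Qed.

End NormedTopology.

Section BairePreimage.
Context {R : realType} {X Y : completeNormedModType R} (T : {linear X -> Y}).
Hypothesis T_surj : forall y, exists x, T x = y.
Hypothesis T_cont : continuous T.

(* Each [F k] is a dense open rescaling of [W] around [T x0]; a point of their
   intersection pulls back through [T] to points of the preimage arbitrarily
   close to [x0]. This avoids the open mapping theorem. *)
Lemma preimage_open_dense (W : set Y) : open W -> dense W -> dense (T @^-1` W).
Proof.
move=> oW dW O [x0 Ox0] oO; apply: contrapT => noW.
have [r r0 Or] := (open_normP O).1 oO x0 Ox0.
pose a (k : nat) : R := k.+1%:R^-1.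
have a0 k : 0 < a k by rewrite invr_gt0 ltr0n.
pose F k := [set y : Y | W (T x0 + a k *: y)].
have oF k : open (F k).
  apply/open_normP => y /((open_normP W).1 oW)[rho rho0 Wrho].
  exists (rho / a k) => [|z yz]; first by rewrite divr_gt0.
  apply: Wrho; rewrite opprD addrACA subrr add0r -scalerBr normrZ gtr0_norm //.
  by rewrite mulrC -ltr_pdivlMr.
have dF k : dense (F k).
  move=> U [u Uu] oU; have [rho rho0 Urho] := (open_normP U).1 oU u Uu.
  have [w [Ww uw]] := dense_normP dW (T x0 + a k *: u) _ (mulr_gt0 (a0 k) rho0).
  exists ((a k)^-1 *: (w - T x0)); split; last first.
    by rewrite /F /= scalerA mulfV ?gt_eqF // scale1r addrC subrK.
  apply: Urho.
  have -> : u - (a k)^-1 *: (w - T x0) = (a k)^-1 *: (T x0 + a k *: u - w).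
    rewrite !(scalerDr, scalerBr, scalerN, scalerA) mulVf ?gt_eqF // scale1r.
    by rewrite opprB addrA (addrC u).
  by rewrite normrZ gtr0_norm ?invr_gt0 // mulrC ltr_pdivrMr // mulrC.
have [y [_ Fy]] := Baire (fun k => conj (oF k) (dF k)) (ex_intro _ 0 I) openT.
have [x Txy] := T_surj y.
pose k := Num.Def.trunc (`|x| / r).
apply: noW; exists (x0 + a k *: x); split; last first.
  by rewrite /= linearD linearZ Txy; exact: (Fy k I).
apply: Or; rewrite opprD addrA subrr add0r normrN normrZ gtr0_norm //.
rewrite mulrC ltr_pdivrMr ?ltr0n // mulrC -ltr_pdivrMr //.
exact: truncnS_gt.
Qed.

Lemma dense_GdeltaI_preimage {A : set X} {B : set Y} :
  dense A -> Gdelta A -> dense B -> Gdelta B -> dense (A `&` T @^-1` B).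
Proof.
move=> dA [U oU eA] dB [W oW eB].
pose F i := U i `&` T @^-1` W i.
have odF i : open (F i) /\ dense (F i).
  split; first by apply: openI => //; move/continuousP: T_cont; apply.
  apply: denseI => //.
    by apply: subset_dense dA _; rewrite eA => x /(_ i I).
  apply: preimage_open_dense => //.
  by apply: subset_dense dB _; rewrite eB => y /(_ i I).
apply: subset_dense (Baire odF) _ => x Fx; split.
  by rewrite eA => i _; have [] := Fx i I.
by rewrite eB => i _; have [] := Fx i I.
Qed.

End BairePreimage.

Section LinearFunctional.
Context {R : realType} {X : normedModType R} {f : X -> R}.
Hypothesis f_lin : linear_functional f.

Lemma linear_functional0 : f 0 = 0.
Proof. by have := f_lin 1 0 0; rewrite scale1r addr0 mul1r; lra. Qed.

Lemma linear_functionalZ a x : f (a *: x) = a * f x.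
Proof. by have := f_lin a x 0; rewrite !addr0 linear_functional0 addr0. Qed.

Lemma linear_functionalD x y : f (x + y) = f x + f y.
Proof. by have := f_lin 1 x y; rewrite scale1r mul1r. Qed.

End LinearFunctional.

Lemma in_dual_le_norm {R : realType} {X : normedModType R} (f : X -> R) :
  in_dual f -> dual_norm f <= 1 -> forall z, f z <= `|z|.
Proof.
move=> [f_lin f_cont] nf.
(* [dual_norm] is meaningful only for a bounded set: [sup] of an unbounded set
   is a junk value. Boundedness comes from continuity at [0]. *)
have [r r0 fr] := continuous_at_normP (f_cont 0) 1 ltr01.
have bounded : has_sup [set `|f y| | y in [set y : X | `|y| <= 1]].
  split; first by exists `|f 0|, 0 => //=; rewrite normr0 ler01.
  exists (2 / r) => _ [y /= y1 <-].
  have ry : `|0 - (r / 2) *: y| < r.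
    rewrite sub0r normrN normrZ gtr0_norm ?divr_gt0 //.
    by have := normr_ge0 y; nra.
  have := fr _ ry; rewrite (linear_functional0 f_lin) sub0r normrN.
  rewrite (linear_functionalZ f_lin).
  rewrite normrM gtr0_norm ?divr_gt0 // ler_pdivlMr // => h.
  by rewrite mulrC; lra.
move=> z; have [->|z0] := eqVneq z 0; first by rewrite (linear_functional0 f_lin) normr0.
have nz : 0 < `|z| by rewrite normr_gt0.
have : `|f (`|z|^-1 *: z)| <= 1.
  apply: le_trans nf; apply: sup_upper_bound => //; exists (`|z|^-1 *: z) => //=.
  by rewrite normrZ normrV ?unitfE ?normr_eq0 // normr_id mulVf ?gt_eqF.
rewrite (linear_functionalZ f_lin) normrM normrV ?unitfE ?normr_eq0 // normr_id.
by rewrite ler_pdivrMl // mulr1; apply: le_trans; rewrite ler_norm.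
Qed.

Section BJInequality.
Context {R : realType} {X Y : normedModType R} (T : {linear X -> Y}).

(* [x - w = lam (x - lam^-1 u)] with [u = w - (f w / |x|) x] in [ker f] and
   [lam = 1 - f w / |x|]; for [lam <= 0] the left-hand side is nonpositive. *)
Lemma preserves_bj_at_norm_ineq x w f : x != 0 -> Jset x f ->
  preserves_bj_at T x -> `|T x| * (2 * `|x| - `|x + w|) <= `|x| * `|T (x - w)|.
Proof.
move=> x0 [f_dual [nf fx]] bjT; have f_lin := f_dual.1.
have f_le : forall z, f z <= `|z| by apply: in_dual_le_norm; rewrite ?nf.
have nx : 0 < `|x| by rewrite normr_gt0.
set b := f w; set lam := 1 - b / `|x|.
have eb : b / `|x| * `|x| = b by rewrite mulfVK ?gt_eqF.
have lam_ge : 2 * `|x| - `|x + w| <= lam * `|x|.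
  have := f_le (x + w); rewrite (linear_functionalD f_lin) fx -/b.
  by rewrite /lam mulrBl mul1r eb; lra.
have nTx := normr_ge0 (T x); have nTxw := normr_ge0 (T (x - w)).
have [lam0|lam0] := ltP 0 lam; last first.
  have : 2 * `|x| - `|x + w| <= 0 by nra.
  nra.
pose u := (- (b / `|x|)) *: x + w.
have x_bj_u : bj_orth x u.
  move=> l; have := f_le (x + l *: u).
  rewrite (linear_functionalD f_lin) (linear_functionalZ f_lin) fx.
  by rewrite /u f_lin fx mulNr eb -/b addNr mulr0 addr0.
have ex : x - w = lam *: (x + (- lam^-1) *: u).
  rewrite scalerDr scalerA mulrN mulfV ?gt_eqF // scaleN1r /u /lam.
  by rewrite scalerBl scale1r opprD scaleNr opprK addrA subrK.
have : lam * `|T x| <= `|T (x - w)|.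
  rewrite ex linearZ normrZ gtr0_norm // ler_pM2l //.
  by rewrite linearD linearZ; exact: bjT.
by nra.
Qed.

Lemma norm_ineq_dense {S : set X} : continuous T -> dense S ->
  (forall x w, S x -> `|T x| * (2 * `|x| - `|x + w|) <= `|x| * `|T (x - w)|) ->
  forall x w, `|T x| * (2 * `|x| - `|x + w|) <= `|x| * `|T (x - w)|.
Proof.
move=> T_cont dS ineqS x w.
pose Phi z := `|z| * `|T (z - w)| - `|T z| * (2 * `|z| - `|z + w|).
suff : 0 <= Phi x by rewrite subr_ge0.
have Phi_cont : {for x, continuous Phi}.
  have Tw_cont : {for x, continuous (fun z => T (z - w))}.
    apply: (@continuous_comp _ _ _ (fun z => z - w) T); last exact: T_cont.
    by apply: cvgB => //; exact: cvg_cst.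
  apply: cvgB; apply: cvgM; try exact: cvg_norm.
  - exact: cvg_norm (T_cont x).
  - apply: cvgB; first by apply: cvgM; [exact: cvg_cst | exact: cvg_norm].
    by apply: cvg_norm; apply: cvgD => //; exact: cvg_cst.
apply/ler_addgt0Pr => e e0.
have [d d0 Phid] := continuous_at_normP Phi_cont e e0.
have [z [Sz xz]] := dense_normP dS x d d0.
have := ineqS z w Sz; rewrite -subr_ge0 -/(Phi z).
by have := Phid z xz; rewrite ltr_norml; lra.
Qed.

End BJInequality.

Section RealFunctions.
Context {R : realType}.

Lemma right_Dini_nonpos_le (phi : R -> R) : continuous phi ->
  (forall t, 0 <= t < 1 -> forall e, 0 < e -> exists2 d, 0 < d &
     forall s, 0 < s < d -> phi (t + s) <= phi t + e * s) ->
  phi 1 <= phi 0.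
Proof.
move=> phi_cont phi_step; apply/ler_addgt0Pr => e e0.
pose B := [set t : R | 0 <= t <= 1 /\ phi t <= phi 0 + e * t].
have B0 : B 0 by split; rewrite ?lexx ?ler01 ?mulr0 ?addr0.
have supB : has_sup B by split; [exists 0 | exists 1 => t [/andP[]]].
set c := sup B.
have c0 : 0 <= c by exact: sup_upper_bound.
have c1 : c <= 1 by apply: ge_sup => [|t [/andP[]]] //; exists 0.
have Bc : phi c <= phi 0 + e * c.
  apply/ler_addgt0Pr => e' e'0.
  have [d d0 phid] := continuous_at_normP (phi_cont c) e' e'0.
  have [t Bt ct] := sup_adherent d0 supB.
  have tc : t <= c by apply: sup_upper_bound.
  have : `|c - t| < d by rewrite ger0_norm ?subr_ge0 // ltrBlDr -ltrBlDl.
  move=> /phid; rewrite ltr_norml => /andP[_ phict].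
  have : e * t <= e * c by rewrite ler_wpM2l // ltW.
  have := Bt.2; lra.
suff c_eq1 : c = 1 by move: Bc; rewrite c_eq1 mulr1.
apply/eqP; rewrite eq_le c1 leNgt /=; apply/negP => c_lt1.
have [d d0 phid] := phi_step c (introT andP (conj c0 c_lt1)) e e0.
pose m := Num.min d (1 - c); pose s := m / 2.
have m0 : 0 < m by rewrite lt_min d0 subr_gt0.
have [md m1] : m <= d /\ m <= 1 - c by rewrite !ge_min !lexx orbT.
have [s0 sm] : 0 < s /\ s < m by split; rewrite /s; lra.
have sd : s < d by lra.
have : B (c + s).
  split; first by apply/andP; split; lra.
  by have := phid s (introT andP (conj s0 sd)); lra.
by move=> /(sup_upper_bound supB); rewrite -/c; lra.
Qed.

Lemma convex_second_difference_small (F : R -> R) (t B : R) :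
  (forall d d', 0 < d -> d <= d' ->
     (F (t + d) - F t) / d <= (F (t + d') - F t) / d') ->
  (forall d, 0 < d -> - B <= (F (t + d) - F t) / d) ->
  forall e, 0 < e -> exists2 d0, 0 < d0 &
    forall d, 0 < d -> d < d0 -> F (t + 2 * d) - 2 * F (t + d) + F t <= e * d.
Proof.
move=> D_mono D_ge e e0.
pose D d := (F (t + d) - F t) / d.
pose E := [set D d | d in [set d : R | 0 < d]].
have infE : has_inf E.
  split; first by exists (D 1), 1 => //=; exact: ltr01.
  by exists (- B) => _ [d d0 <-]; exact: D_ge.
have e20 : 0 < e / 2 by rewrite divr_gt0.
have [_ [d1 d10 <-] Dd1] := inf_adherent e20 infE.
exists (d1 / 2); first by rewrite divr_gt0.
move=> d d0 dd1.
have infE_le : inf E <= D d by apply: ge_inf infE.2 _ _; exists d.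
have D2d_le : D (2 * d) <= D d1.
  by apply: D_mono; rewrite ?mulr_gt0 // mulrC -ler_pdivlMr // ltW.
have -> : F (t + 2 * d) - 2 * F (t + d) + F t = 2 * d * (D (2 * d) - D d).
  by rewrite /D; field; rewrite gt_eqF.
have : D (2 * d) - D d <= e / 2 by lra.
by nra.
Qed.

End RealFunctions.

Section NormAlongLine.
Context {R : realType} {V : normedModType R} (p v : V).

Lemma norm_line_quotient_mono t d d' : 0 < d -> d <= d' ->
  (`|p + (t + d) *: v| - `|p + t *: v|) / d <=
  (`|p + (t + d') *: v| - `|p + t *: v|) / d'.
Proof.
move=> d0 dd'; have d'0 : 0 < d' by exact: lt_le_trans dd'.
pose th := d / d'.
have th0 : 0 <= th by rewrite divr_ge0 // ltW.
have th1 : th <= 1 by rewrite ler_pdivrMr // mul1r.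
have convex : `|p + (t + d) *: v| <=
    (1 - th) * `|p + t *: v| + th * `|p + (t + d') *: v|.
  have -> : p + (t + d) *: v = (1 - th) *: (p + t *: v) + th *: (p + (t + d') *: v).
    rewrite !scalerDr !scalerA addrACA -!scalerDl subrK scale1r.
    by congr (_ + _ *: _); rewrite /th; field; rewrite gt_eqF.
  apply: (le_trans (ler_normD _ _)).
  by rewrite !normrZ (ger0_norm (_ : 0 <= 1 - th)) ?subr_ge0 // !gtr0_norm ?invr_gt0.
have -> : (`|p + (t + d') *: v| - `|p + t *: v|) / d' =
    th * (`|p + (t + d') *: v| - `|p + t *: v|) / d.
  by rewrite /th; field; rewrite !gt_eqF.
by rewrite ler_pM2r ?invr_gt0 //; lra.
Qed.

Lemma norm_line_quotient_ge t d : 0 < d ->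
  - `|v| <= (`|p + (t + d) *: v| - `|p + t *: v|) / d.
Proof.
move=> d0; rewrite ler_pdivlMr //.
have : `|p + t *: v| <= `|p + (t + d) *: v| + `|(- d) *: v|.
  have -> : p + t *: v = (p + (t + d) *: v) + (- d) *: v.
    by rewrite -addrA -scalerDl addrK.
  exact: ler_normD.
by rewrite normrZ normrN gtr0_norm //; lra.
Qed.

End NormAlongLine.

Definition norm_ratio {R : realType} {X Y : normedModType R} (T : X -> Y) (x : X) : R :=
  `|T x| / `|x|.

Lemma norm_ratioZ {R : realType} {X Y : normedModType R} (T : {linear X -> Y}) c x :
  c != 0 -> norm_ratio T (c *: x) = norm_ratio T x.
Proof.
move=> c0; rewrite /norm_ratio linearZ !normrZ -mulf_div divff ?mul1r //.
by rewrite normr_eq0.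
Qed.

Lemma continuous_of_norm_bound {R : realType} {X Y : normedModType R}
  (T : {linear X -> Y}) K : (forall x, `|T x| <= K * `|x|) -> continuous T.
Proof.
move=> T_bound; apply/linear_bounded_continuous.
exists `|K|; split; first exact: normr_real.
move=> M KM; apply/nbhs_ballP; exists 1 => [|x]; first exact: ltr01.
rewrite -ball_normE /= sub0r normrN => x1.
have := T_bound x; have := ler_norm K; have := normr_ge0 x; have := normr_ge0 K.
by nra.
Qed.

Section NormRatioAlongLine.
Context {R : realType} {X Y : normedModType R} {T : {linear X -> Y}} {K : R}.
Hypothesis K_gt0 : 0 < K.
Hypothesis T_bound : forall x, `|T x| <= K * `|x|.
Hypothesis T_ineq :
  forall x w, `|T x| * (2 * `|x| - `|x + w|) <= `|x| * `|T (x - w)|.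
Context {p v : X}.
Hypothesis line_neq0 : forall s : R, p + s *: v != 0.

Let F s := `|p + s *: v|.
Let G s := `|T (p + s *: v)|.
Let phi s := G s / F s.

Let F_gt0 s : 0 < F s.
Proof. by rewrite normr_gt0 line_neq0. Qed.

Let phi_cont : continuous phi.
Proof.
have T_cont : continuous T := continuous_of_norm_bound T _ T_bound.
have line_cont : continuous (fun s : R => p + s *: v).
  by move=> s; apply: cvgD; [exact: cvg_cst | apply: cvgZ => //; exact: cvg_cst].
move=> t; apply: cvgM.
  apply: cvg_norm; apply: (@continuous_comp _ _ _ (fun s : R => p + s *: v) T).
    exact: line_cont.
  exact: T_cont.
apply: cvgV; first by rewrite gt_eqF.
by apply: cvg_norm; exact: line_cont.
Qed.

(* [T_ineq] at [x = p + (t + s) v], [w = s v], together with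
   [F (t + 2 s) - 2 F (t + s) + F t = o(s)]. *)
Let phi_step t e : 0 < e -> exists2 d, 0 < d &
  forall s, 0 < s < d -> phi (t + s) <= phi t + e * s.
Proof.
move=> e0; have Ft := F_gt0 t.
pose e' := e * F t / K.
have e'0 : 0 < e' by rewrite divr_gt0 // mulr_gt0.
have [d d0 F2] := @convex_second_difference_small _ F t `|v|
  (norm_line_quotient_mono p v t) (norm_line_quotient_ge p v t) e' e'0.
exists d => // s /andP[s0 sd].
have F2s := F2 s s0 sd.
have Fts := F_gt0 (t + s).
have := T_ineq (p + (t + s) *: v) (s *: v).
have -> : p + (t + s) *: v + s *: v = p + (t + 2 * s) *: v.
  by rewrite -addrA -scalerDl; congr (_ + _ *: _); ring.
have -> : p + (t + s) *: v - s *: v = p + t *: v.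
  by rewrite -addrA -scalerBl; congr (_ + _ *: _); ring.
rewrite -/(F (t + s)) -/(F (t + 2 * s)) -/(G (t + s)) -/(G t) => ineq.
have Gts_le : G (t + s) <= K * F (t + s) by exact: T_bound.
have Gts0 : 0 <= G (t + s) by exact: normr_ge0.
have key : G (t + s) * F t <= F (t + s) * G t + e * s * F (t + s) * F t.
  have k1 : G (t + s) * (F t - e' * s) <= G (t + s) * (2 * F (t + s) - F (t + 2 * s)).
    by apply: ler_wpM2l => //; lra.
  have k2 : G (t + s) * (e' * s) <= K * F (t + s) * (e' * s).
    by apply: ler_wpM2r => //; rewrite mulr_ge0 // ltW.
  have k3 : K * F (t + s) * (e' * s) = e * s * F (t + s) * F t.
    by rewrite /e'; field; rewrite gt_eqF.
  lra.
rewrite /phi ler_pdivrMr // -(ler_pM2r Ft).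
have Gt_eq : G t / F t * F t = G t by rewrite divfK ?gt_eqF.
by rewrite -Gt_eq in key; lra.
Qed.

Lemma norm_ratio_line_le : norm_ratio T (p + v) <= norm_ratio T p.
Proof.
have := @right_Dini_nonpos_le _ phi phi_cont (fun t _ e => phi_step t e).
by rewrite /phi /G /F scale1r scale0r addr0.
Qed.

End NormRatioAlongLine.

Lemma norm_ratio_const {R : realType} {X Y : normedModType R} {T : {linear X -> Y}} {K : R} :
  0 < K -> (forall x, `|T x| <= K * `|x|) ->
  (forall x w, `|T x| * (2 * `|x| - `|x + w|) <= `|x| * `|T (x - w)|) ->
  forall p q, p != 0 -> q != 0 -> norm_ratio T q = norm_ratio T p.
Proof.
move=> K0 T_bound T_ineq p q p0 q0.
have [[s ps0]|segment_neq0] := pselect (exists s : R, p + s *: (q - p) = 0).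
  have s0 : s != 0.
    by apply: contraNneq p0 => s0; move: ps0; rewrite s0 scale0r addr0 => ->.
  have sq : s *: q = s *: p - p.
    by apply/eqP; rewrite -subr_eq0 opprB addrCA -scalerBr ps0.
  have q_eq : q = ((s - 1) / s) *: p.
    apply: (scalerI s0); rewrite scalerA mulrCA divff // mulr1.
    by rewrite sq scalerBl scale1r.
  have c0 : (s - 1) / s != 0.
    by apply: contraNneq q0 => c0; rewrite q_eq c0 scale0r.
  by rewrite q_eq norm_ratioZ.
have pq_neq0 s : p + s *: (q - p) != 0.
  by apply/eqP => ps0; apply: segment_neq0; exists s.
have qp_neq0 s : q + s *: (p - q) != 0.
  have -> : q + s *: (p - q) = p + (1 - s) *: (q - p).
    by rewrite scalerBl scale1r addrA (addrC p (q - p)) subrK -scalerN opprB.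
  exact: pq_neq0.
have := norm_ratio_line_le K0 T_bound T_ineq pq_neq0.
have := norm_ratio_line_le K0 T_bound T_ineq qp_neq0.
rewrite (addrC p (q - p)) (addrC q (p - q)) !subrK => qp pq.
by apply/eqP; rewrite eq_le pq qp.
Qed.

Theorem mainTheorem5 (R : realType) (X Y : completeNormedModType R)
  (T : {linear X -> Y}) :
  dense (@smooth_points R X) -> Gdelta (@smooth_points R X) ->
  dense (@smooth_points R Y) -> Gdelta (@smooth_points R Y) ->
  bijective T ->
  (exists M : R, forall x : X, `|T x| <= M * `|x|) ->
  (forall x : X, smooth_points x -> smooth_points (T x) -> preserves_bj_at T x) ->
  exists lambda : R, 0 < lambda /\ forall x : X, `|T x| = lambda * `|x|.
Proof.
move=> dSX GSX dSY GSY [T' TK KT] [M T_boundM] bjT.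
pose K := `|M| + 1.
have K0 : 0 < K by rewrite ltr_pwDr.
have T_bound x : `|T x| <= K * `|x|.
  by apply: le_trans (T_boundM x) _; rewrite ler_wpM2r // (le_trans (ler_norm M)) ?lerDl.
have T_cont := continuous_of_norm_bound T _ T_bound.
have T_ineq : forall x w, `|T x| * (2 * `|x| - `|x + w|) <= `|x| * `|T (x - w)|.
  have T_surj y : exists x, T x = y by exists (T' y).
  have dS := dense_GdeltaI_preimage T T_surj T_cont dSX GSX dSY GSY.
  apply: (norm_ineq_dense T T_cont dS) => x w [Sx STx].
  have [x0 [f Jf]] := Sx.
  by apply: (preserves_bj_at_norm_ineq T x w f x0); [rewrite Jf | exact: bjT].
have [p [_ [p0 _]]] := dSX setT (ex_intro _ 0 I) openT.
have Tp0 : T p != 0 by apply: contra_neq p0 => Tp0; rewrite -(TK p) Tp0 -(linear0 T) TK.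
exists (norm_ratio T p); split; first by rewrite divr_gt0 ?normr_gt0.
move=> x; have [->|x0] := eqVneq x 0; first by rewrite linear0 !normr0 mulr0.
by rewrite -(norm_ratio_const K0 T_bound T_ineq p x p0 x0) /norm_ratio divfK ?normr_eq0.
Qed.
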